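(* Let $M$ be a right $R$-module that is principally Goldie*-lifting and distributive. Then $M/\mathrm{Rad}(M)$ is principally semisimple.
   Context: $R$ is an associative ring with identity; modules are unital right $R$-modules; $\mathrm{Rad}(M)$ is the Jacobson radical of $M$. $M$ is distributive if for all submodules $A,B,C$, $A+(B\cap C)=(A+B)\cap(A+C)$. A module is principally semisimple if every cyclic submodule is a direct summand. $K\ll M$ means $K$ is small in $M$. For submodules $X,Y$ of $M$, $X\,\beta^*\,Y$ means $(X+Y)/X\ll M/X$ and $(X+Y)/Y\ll M/Y$. $M$ is principally Goldie*-lifting if for every cyclic submodule $X$ of $M$ there is a direct summand $D$ of $M$ with $X\,\beta^*\,D$. *)

(* Right R-modules are modelled as left modules over the
   converse ring R^c (right multiplication m.r is written r *: m). *)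
From HB Require Import structures.
From mathcomp Require Import all_boot all_order all_algebra.
Set Implicit Arguments. Unset Strict Implicit. Unset Printing Implicit Defensive.
Import GRing.Theory.
Local Open Scope ring_scope.

Section ModuleLattice.
Variables (R : nzRingType) (M : lmodType R^c).

Definition mset := M -> Prop.
Definition seteq (A B : mset) := forall x, A x <-> B x.
Definition subset (A B : mset) := forall x, A x -> B x.
Definition full (A : mset) := forall x, A x.
Definition zeroS : mset := fun x => x = 0.

Definition submod (A : mset) :=
  [/\ A 0, (forall x y, A x -> A y -> A (x + y)) &
      (forall (r : R^c) x, A x -> A (r *: x))].

Definition sumS (A B : mset) : mset :=
  fun x => exists a b, [/\ A a, B b & x = a + b].
Definition capS (A B : mset) : mset := fun x => A x /\ B x.

Definition cyclic (m : M) : mset := fun x => exists r : R^c, x = r *: m.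

Definition maximal (A : mset) :=
  [/\ submod A, ~ full A &
      forall B, submod B -> subset A B -> full B \/ seteq B A].
Definition Rad : mset := fun x => forall A, maximal A -> A x.

Definition small (K : mset) :=
  forall L, submod L -> full (sumS K L) -> full L.

(* For submodules X <= K of M: K/X << M/X, expressed through the
   correspondence between submodules of M/X and submodules of M containing X. *)
Definition small_quot (X K : mset) :=
  forall L, submod L -> subset X L -> full (sumS K L) -> full L.

Definition beta_star (X Y : mset) :=
  small_quot X (sumS X Y) /\ small_quot Y (sumS X Y).

Definition direct_summand (D : mset) :=
  submod D /\ exists D', [/\ submod D', full (sumS D D') & seteq (capS D D') zeroS].

Definition principally_Goldie_star_lifting :=
  forall m : M, exists D, direct_summand D /\ beta_star (cyclic m) D.

Definition distributive :=
  forall A B C, submod A -> submod B -> submod C ->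
    seteq (sumS A (capS B C)) (capS (sumS A B) (sumS A C)).

(* For submodules X <= K of M: K/X is a direct summand of M/X
   (again via the submodule correspondence for M/X). *)
Definition quot_direct_summand (X K : mset) :=
  exists N, [/\ submod N, subset X N, full (sumS K N) & seteq (capS K N) X].

(* M/X is principally semisimple: every cyclic submodule (m+X)R = (mR+X)/X
   of M/X is a direct summand of M/X. *)
Definition quot_principally_semisimple (X : mset) :=
  forall m : M, quot_direct_summand X (sumS (cyclic m) X).

End ModuleLattice.

Arguments principally_Goldie_star_lifting : clear implicits.
Arguments distributive : clear implicits.
Arguments Rad : clear implicits.

(* Take a cyclic submodule X = mR and a direct summand D of M, with complement
   D', such that X beta* D.  Since (X + D)/X is small in M/X, X + D' = M.  Since
   (X + D)/D is small in M/D, every x in X /\ D' lies in each maximal submodule A: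
   otherwise A + xR = M, which forces D + (D' /\ A) = M and then x in A.  Hence
   X /\ D' <= Rad(M), and distributivity gives (X + Rad) /\ (D' + Rad) = Rad,
   so (X + Rad)/Rad is a direct summand of M/Rad with complement (D' + Rad)/Rad. *)
From Pilot Require Import Defs.
From HB Require Import structures.
From mathcomp Require Import all_boot all_order all_algebra.
From Stdlib Require Import Classical.
Import GRing.Theory.
Local Open Scope ring_scope.

Section ModuleLattice.
Context {R : nzRingType} {M : lmodType R^c}.
Implicit Types (A B D E P X : mset M) (x : M).

Lemma submod0 {A} : submod A -> A 0.
Proof. by case. Qed.

Lemma submodD {A x y} : submod A -> A x -> A y -> A (x + y).
Proof. by case=> _ AD _; apply: AD. Qed.

Lemma submodZ {A} (r : R^c) {x} : submod A -> A x -> A (r *: x).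
Proof. by case=> _ _ AZ; apply: AZ. Qed.

Lemma submodB {A x y} : submod A -> A x -> A y -> A (x - y).
Proof. by move=> sA Ax Ay; rewrite -scaleN1r; apply: submodD (submodZ _ sA Ay). Qed.

Lemma submod_sumS {A B} : submod A -> submod B -> submod (sumS A B).
Proof.
move=> [A0 AD AZ] [B0 BD BZ]; split.
- by exists 0, 0; rewrite addr0.
- move=> _ _ [a [b [Aa Bb ->]]] [a' [b' [Aa' Bb' ->]]].
  by exists (a + a'), (b + b'); rewrite addrACA; split; [exact: AD|exact: BD|].
- move=> r _ [a [b [Aa Bb ->]]].
  by exists (r *: a), (r *: b); rewrite scalerDr; split; [exact: AZ|exact: BZ|].
Qed.

Lemma submod_capS {A B} : submod A -> submod B -> submod (capS A B).
Proof.
move=> [A0 AD AZ] [B0 BD BZ]; split=> //.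
- by move=> x y [? ?] [? ?]; split; [exact: AD|exact: BD].
- by move=> r x [? ?]; split; [exact: AZ|exact: BZ].
Qed.

Lemma submod_cyclic (m : M) : submod (cyclic m).
Proof.
split.
- by exists 0; rewrite scale0r.
- by move=> _ _ [r ->] [s ->]; exists (r + s); rewrite scalerDl.
- by move=> r _ [s ->]; exists (r * s); rewrite scalerA.
Qed.

Lemma cyclic_id (m : M) : cyclic m m.
Proof. by exists 1; rewrite scale1r. Qed.

Lemma submod_Rad : submod (Rad R M).
Proof.
split.
- by move=> A [[]].
- by move=> x y Rx Ry A maxA; apply: submodD (Rx A maxA) (Ry A maxA); case: maxA.
- by move=> r x Rx A maxA; apply: submodZ (Rx A maxA); case: maxA.
Qed.

Lemma sumS_subl {A B} : submod B -> Defs.subset A (sumS A B).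
Proof. by move=> sB x Ax; exists x, 0; rewrite addr0; split=> //; apply: submod0. Qed.

Lemma sumS_subr {A B} : submod A -> Defs.subset B (sumS A B).
Proof. by move=> sA x Bx; exists 0, x; rewrite add0r; split=> //; apply: submod0. Qed.

Lemma sumSC {A B x} : sumS A B x -> sumS B A x.
Proof. by move=> [a [b [Aa Bb ->]]]; exists b, a; rewrite addrC. Qed.

Lemma maximal_sumS_cyclic {A x} : maximal A -> ~ A x -> full (sumS A (cyclic x)).
Proof.
case=> sA _ maxA nAx.
have [//|eqA] := maxA _ (submod_sumS sA (submod_cyclic x)) (sumS_subl (submod_cyclic x)).
by case: nAx; apply/eqA/sumS_subr/cyclic_id.
Qed.

Lemma small_quot_supplement {X D E} :
  submod X -> submod E -> full (sumS D E) -> small_quot X (sumS X D) ->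
  full (sumS X E).
Proof.
move=> sX sE fDE smallX; apply: smallX => [||y].
- exact: submod_sumS.
- exact: sumS_subl.
- have [d [d' [Dd Ed' ->]]] := fDE y.
  by exists d, d'; split; [apply: sumS_subr|apply: sumS_subr|].
Qed.

Lemma small_quot_summand_cap_Rad {X D E x} :
  submod X -> submod D -> submod E -> full (sumS D E) ->
  seteq (capS D E) (zeroS (M:=M)) -> small_quot D (sumS X D) ->
  X x -> E x -> Rad R M x.
Proof.
move=> sX sD sE fDE capDE smallD Xx Ex A maxA; apply: NNPP => nAx.
have sA : submod A by case: maxA.
have fAx := maximal_sumS_cyclic maxA nAx.
have fDA : full (sumS D (capS E A)).
  have sEA := submod_capS sE sA.
  apply: smallD; [exact: submod_sumS sD sEA|exact: sumS_subl sEA|] => y.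
  have [d [d' [Dd Ed' ->]]] := fDE y.
  have [a [_ [Aa [r ->] d'E]]] := fAx d'.
  have Ea : E a.
    have -> : a = d' - r *: x by rewrite d'E addrK.
    exact: submodB sE Ed' (submodZ r sE Ex).
  exists (r *: x + d), a; split.
  - by exists (r *: x), d; split=> //; apply: submodZ.
  - by apply: (sumS_subr (B := capS E A) sD).
  - by rewrite d'E addrCA addrC [d + _]addrC.
have [d [a [Dd [Ea Aa] xE]]] := fDA x.
have d0 : d = 0.
  apply/(capDE d); split=> //.
  have -> : d = x - a by rewrite xE addrK.
  exact: submodB sE Ex Ea.
by apply: nAx; rewrite xE d0 add0r.
Qed.

Lemma quot_direct_summand_of_supplement {X E P} :
  distributive R M -> submod X -> submod E -> submod P ->
  full (sumS X E) -> Defs.subset (capS X E) P ->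
  quot_direct_summand P (sumS X P).
Proof.
move=> distrM sX sE sP fXE capP; exists (sumS E P); split.
- exact: submod_sumS.
- exact: sumS_subr.
- move=> y; have [x [d' [Xx Ed' ->]]] := fXE y.
  by exists x, d'; split; [apply: sumS_subl|apply: sumS_subl|].
- move=> z; split=> [[XPz EPz]|Pz].
  + have [p [w [Pp XEw ->]]] := proj2 (distrM _ _ _ sP sX sE z) (conj (sumSC XPz) (sumSC EPz)).
    exact: submodD sP Pp (capP _ XEw).
  + by split; apply: sumS_subr.
Qed.

End ModuleLattice.

Theorem proposition3p13 (R : nzRingType) (M : lmodType R^c) :
  principally_Goldie_star_lifting R M -> distributive R M ->
  quot_principally_semisimple (Rad R M).
Proof.
move=> liftM distrM m.
have [D [[sD [D' [sD' fDD' capDD']]] [smallX smallD]]] := liftM m.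
have sX := submod_cyclic m.
apply: (quot_direct_summand_of_supplement distrM sX sD' (submod_Rad (M := M))).
- exact: small_quot_supplement smallX.
- by move=> x [Xx D'x]; apply: small_quot_summand_cap_Rad smallD Xx D'x.
Qed.
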